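(* Let $G=(V,E)$ be a connected unit disk graph. Then the output of Heuristic CDOM on $G$ is a connected dominating set of $G$.
   Context: A graph $G$ is a unit disk graph if its vertices can be put in one-to-one correspondence with closed disks of radius $1$ in the plane so that two vertices are adjacent if and only if the corresponding disks intersect (tangent disks are considered to intersect). A dominating set is a set $V'\subseteq V$ such that every vertex of $V\setminus V'$ has a neighbor in $V'$; it is connected if the subgraph induced on $V'$ is connected. $G(U)$ denotes the subgraph induced on $U$. Heuristic CDOM: (1) pick an arbitrary vertex $v\in V$; (2) construct a breadth-first spanning tree $T$ of $G$ rooted at $v$, let $k$ be its depth and $S_i$ the set of vertices at level $i$ (distance $i$ from $v$ in $T$), $0\le i\le k$; (3) set $IS_0=\{v\}$, $NS_0=\emptyset$; (4) for $i=1,\dots,k$: let $DS_i$ be the set of vertices of $S_i$ adjacent to some vertex of $IS_{i-1}$; let $IS_i$ be any maximal independent set of $G(S_i\setminus DS_i)$; let $NS_i$ be the set of parents in $T$ of the vertices of $IS_i$; (5) output $\left(\bigcup_{i=0}^k IS_i\right)\cup\left(\bigcup_{i=0}^k NS_i\right)$. *)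

From Stdlib Require Import Reals.
From mathcomp Require Import all_boot.
Set Implicit Arguments. Unset Strict Implicit. Unset Printing Implicit Defensive.

Section Defs.
Variable T : finType.

(* Unit disk graph: vertices correspond one-to-one to closed radius-1 disks
   (centres pos x), adjacent iff the disks intersect, i.e. centre distance <= 2
   (squared distance <= 4).  Graphs are simple: no loops. *)
Definition unit_disk_graph (e : rel T) : Prop :=
  exists pos : T -> (R * R),
    injective pos /\
    forall x y : T,
      e x y <-> (x <> y /\
        Rle (Rplus (pow (Rminus (fst (pos x)) (fst (pos y))) 2)
                   (pow (Rminus (snd (pos x)) (snd (pos y))) 2))
            (IZR 4)).

Definition connected_graph (e : rel T) : Prop := forall x y : T, connect e x y.

Fixpoint ball (e : rel T) (v : T) (n : nat) : {set T} :=
  match n with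
  | 0 => [set v]
  | n'.+1 => ball e v n' :|: [set y | [exists x in ball e v n', e x y]]
  end.

Definition level (e : rel T) (v : T) (i : nat) : {set T} :=
  match i with
  | 0 => [set v]
  | i'.+1 => ball e v i'.+1 :\: ball e v i'
  end.

Definition bfs_tree (e : rel T) (v : T) (par : T -> T) : Prop :=
  par v = v /\
  (forall u, u != v -> e u (par u)) /\
  (forall i u, u \in level e v i.+1 -> par u \in level e v i).

Definition independent (e : rel T) (I : {set T}) : bool :=
  [forall x in I, forall y in I, ~~ e x y].

Definition maximal_independent_in (e : rel T) (W I : {set T}) : bool :=
  maxset (fun J : {set T} => (J \subset W) && independent e J) I.

Definition dominating (e : rel T) (D : {set T}) : Prop :=
  forall x, x \notin D -> exists2 y, y \in D & e x y.

Definition induced_connected (e : rel T) (D : {set T}) : Prop :=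
  forall x y, x \in D -> y \in D ->
    connect [rel a b | [&& e a b, a \in D & b \in D]] x y.

Definition connected_dominating (e : rel T) (D : {set T}) : Prop :=
  dominating e D /\ induced_connected e D.

Definition DS (e : rel T) (v : T) (IS : nat -> {set T}) (i : nat) : {set T} :=
  [set u in level e v i | [exists w in IS i.-1, e u w]].

Definition NS (par : T -> T) (IS : nat -> {set T}) (i : nat) : {set T} :=
  if i is 0 then set0 else par @: IS i.

(* Valid run of Heuristic CDOM with root v, BFS tree par of depth k and the
   choices IS_1..IS_k of maximal independent sets. *)
Definition cdom_run (e : rel T) (v : T) (par : T -> T) (k : nat)
    (IS : nat -> {set T}) : Prop :=
  IS 0 = [set v] /\
  forall i, 1 <= i <= k ->
    maximal_independent_in e (level e v i :\: DS e v IS i) (IS i).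

Definition cdom_output (par : T -> T) (k : nat) (IS : nat -> {set T}) : {set T} :=
  \bigcup_(i < k.+1) (IS i :|: NS par IS i).

End Defs.

From Stdlib Require Import Reals.
From mathcomp Require Import all_boot.

Set Implicit Arguments.
Unset Strict Implicit.
Unset Printing Implicit Defensive.

(* Every vertex x at level i is dominated by IS_j for some j <= i: either x
   lies in DS_i and has a neighbour in IS_(i-1), or x is a candidate at level
   i and is in IS_i or adjacent to it by maximality.
   For connectivity, a vertex u of IS_i (i > 0) is joined to its parent
   p = par u, which is in the output and lies at level i-1, so p is dominated
   by some IS_j with j < i; by strong induction on i every vertex of IS_i,
   and hence every parent, is connected to the root inside the output. *)

Section UnitDiskGraph.
Variables (T : finType) (e : rel T).
Hypothesis udg : unit_disk_graph e.

Lemma unit_disk_graph_sym x y : e x y -> e y x.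
Proof.
have sq_swap (a b : R) : pow (Rminus a b) 2 = pow (Rminus b a) 2 by ring.
case: udg => pos [_ adj]; rewrite !adj => -[/nesym neq_yx dist_le]; split=> //.
by rewrite sq_swap [pow (Rminus (snd _) _) 2]sq_swap.
Qed.

Lemma unit_disk_graph_irrefl x : ~~ e x x.
Proof. by case: udg => pos [_ adj]; apply/negP; rewrite adj => -[]. Qed.

End UnitDiskGraph.

Section Graph.
Variables (T : finType) (e : rel T).

Lemma mem_ball_root v n : v \in ball e v n.
Proof. by elim: n => [|n IHn] /=; rewrite ?in_set1 // in_setU IHn. Qed.

Lemma mem_ball_level v n x :
  x \in ball e v n -> exists2 i, i <= n & x \in level e v i.
Proof.
elim: n => [|n IHn] x_ball; first by exists 0.
have [/IHn [i le_in x_i] | x_notin] := boolP (x \in ball e v n).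
  by exists i => //; apply: leqW.
by exists n.+1; rewrite //= in_setD x_notin.
Qed.

Lemma level_succ_neq_root v i u : u \in level e v i.+1 -> u != v.
Proof.
rewrite in_setD => /andP [u_out _].
by apply: contraNneq u_out => ->; apply: mem_ball_root.
Qed.

Definition induced (D : {set T}) : rel T :=
  [rel a b | [&& e a b, a \in D & b \in D]].

Lemma induced_edge (D : {set T}) a b :
  e a b -> a \in D -> b \in D -> induced D a b.
Proof. by move=> eab aD bD; apply/and3P. Qed.

Hypothesis e_sym : forall x y, e x y -> e y x.
Hypothesis e_irrefl : forall x, ~~ e x x.

Lemma independentU1 I x :
  independent e I -> ~~ [exists w in I, e x w] -> independent e (x |: I).
Proof.
move=> /forall_inP indI no_nbr; apply/forall_inP => a; rewrite in_setU1.
have nbr_x w : w \in I -> ~~ e x w.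
  by move=> wI; apply: contra no_nbr => exw; apply/exists_inP; exists w.
case/predU1P => [-> | aI]; apply/forall_inP => b; rewrite in_setU1.
  by case/predU1P => [-> | /nbr_x].
by case/predU1P => [-> | bI]; [apply: contra (nbr_x a aI); apply: e_sym |
                               exact: (forall_inP (indI a aI))].
Qed.

Lemma maximal_independent_dominates W I x :
  maximal_independent_in e W I -> x \in W ->
  x \in I \/ exists2 w, w \in I & e x w.
Proof.
move=> /maxsetP [/andP [subIW indI] I_max] xW.
have [/exists_inP [w wI exw] | no_nbr] := boolP [exists w in I, e x w].
  by right; exists w.
left; rewrite -(I_max (x |: I)) ?setU11 ?subsetUr //.
by rewrite subUset sub1set xW subIW independentU1.
Qed.

Lemma induced_sym (D : {set T}) a b : induced D a b -> induced D b a.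
Proof. by case/and3P => /e_sym eba aD bD; apply/and3P. Qed.

Lemma induced_connected_to_root (D : {set T}) (r : T) :
  (forall x, x \in D -> connect (induced D) x r) -> induced_connected e D.
Proof.
move=> to_r x y xD yD.
have sym_induced : connect_sym (induced D).
  by apply: sym_connect_sym => a b; apply/idP/idP => /induced_sym.
by apply: connect_trans (to_r x xD) _; rewrite sym_induced; apply: to_r.
Qed.

Section Cdom.
Variables (v : T) (par : T -> T) (k : nat) (IS : nat -> {set T}).
Hypothesis par_edge : forall u, u != v -> e u (par u).
Hypothesis par_level : forall i u, u \in level e v i.+1 -> par u \in level e v i.
Hypothesis IS0 : IS 0 = [set v].
Hypothesis IS_max : forall i, 1 <= i <= k ->
  maximal_independent_in e (level e v i :\: DS e v IS i) (IS i).

Local Notation D := (cdom_output par k IS).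

Lemma IS_sub_cdom i : i <= k -> IS i \subset D.
Proof.
move=> le_ik; apply/subsetP => x xI.
by apply/bigcupP; exists (Ordinal (le_ik : i < k.+1)); rewrite // in_setU xI.
Qed.

Lemma IS_sub_level i : i <= k -> IS i \subset level e v i.
Proof.
case: i => [|i] le_ik; first by rewrite IS0.
have /maxsetp /andP [subIW _] := @IS_max i.+1 le_ik.
by apply: subset_trans subIW _; apply: subsetDl.
Qed.

Lemma IS_par_induced i u : i < k -> u \in IS i.+1 -> induced D u (par u).
Proof.
move=> lt_ik uI; have u_lvl := subsetP (IS_sub_level lt_ik) u uI.
apply: induced_edge (par_edge (level_succ_neq_root u_lvl)) _ _.
  exact: (subsetP (IS_sub_cdom lt_ik)).
apply/bigcupP; exists (Ordinal (lt_ik : i.+1 < k.+1)) => //.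
by rewrite in_setU imset_f ?orbT.
Qed.

Lemma level_dominated_by_IS i x : i <= k -> x \in level e v i ->
  exists2 j, j <= i & (x \in IS j \/ exists2 w, w \in IS j & e x w).
Proof.
case: i => [|i] le_ik x_lvl; first by exists 0; rewrite // IS0; left.
have [| x_notDS] := boolP (x \in DS e v IS i.+1).
  by rewrite inE => /andP [_ /exists_inP [w wI exw]]; exists i => //; right; exists w.
exists i.+1 => //; apply: maximal_independent_dominates (IS_max _) _ => //.
by rewrite in_setD x_notDS.
Qed.

Lemma IS_connect_root i u : i <= k -> u \in IS i -> connect (induced D) u v.
Proof.
elim/ltn_ind: i u => -[|i] IHi u lt_ik uI.
  by move: uI; rewrite IS0 in_set1 => /eqP ->.
have u_par := IS_par_induced lt_ik uI.
apply: connect_trans (connect1 u_par) _.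
have le_ik : i <= k by apply: ltnW.
have u_lvl := subsetP (IS_sub_level lt_ik) u uI.
have [j le_ji [pI | [w wI pw]]] := level_dominated_by_IS le_ik (par_level u_lvl).
  by apply: IHi pI; last apply: leq_trans le_ik.
have le_jk : j <= k by apply: leq_trans le_ik.
have p_w : induced D (par u) w.
  case/and3P: u_par => _ _ pD.
  exact: induced_edge pw pD (subsetP (IS_sub_cdom le_jk) w wI).
exact: connect_trans (connect1 p_w) (IHi j _ w le_jk wI).
Qed.

Lemma cdom_connect_root x : x \in D -> connect (induced D) x v.
Proof.
case/bigcupP => -[i lt_ik] _ /=; rewrite in_setU => /orP [xI | ].
  exact: IS_connect_root xI.
case: i lt_ik => [|i]; rewrite ltnS => lt_ik /=; first by rewrite in_set0.
case/imsetP => u uI ->.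
have p_u := induced_sym (IS_par_induced lt_ik uI).
exact: connect_trans (connect1 p_u) (IS_connect_root lt_ik uI).
Qed.

Lemma cdom_dominating : ball e v k = [set: T] -> dominating e D.
Proof.
move=> ball_k x xD.
have [i le_ik x_lvl] : exists2 i, i <= k & x \in level e v i.
  by apply: mem_ball_level; rewrite ball_k inE.
have [j le_ji [xI | [w wI exw]]] := level_dominated_by_IS le_ik x_lvl;
  have IS_D := subsetP (IS_sub_cdom (leq_trans le_ji le_ik)).
  by rewrite IS_D in xD.
by exists w; rewrite ?IS_D.
Qed.

End Cdom.
End Graph.

Theorem lemma4p4 (T : finType) (e : rel T)
    (udg : unit_disk_graph e) (conn : connected_graph e)
    (v : T) (par : T -> T) (hbfs : bfs_tree e v par)
    (k : nat) (hk : ball e v k = [set: T]) (hkne : level e v k != set0)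
    (IS : nat -> {set T}) (hrun : cdom_run e v par k IS) :
  connected_dominating e (cdom_output par k IS).
Proof.
have e_sym := unit_disk_graph_sym udg.
have e_irrefl := unit_disk_graph_irrefl udg.
case: hbfs => _ [par_edge par_level]; case: hrun => IS0 IS_max.
split; first exact: (cdom_dominating e_sym e_irrefl IS0 IS_max hk).
apply: (induced_connected_to_root e_sym (r := v)).
exact: (cdom_connect_root e_sym e_irrefl par_edge par_level IS0 IS_max).
Qed.
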